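(* Let $\tau\in(0,1]$, suppose $k\,\alpha^{(2-\tau)d}\ge 2$, and let $\beta\ge 1$ be an integer. Run $\beta$ independent copies of the Fast-Filter model described in the context (with independent randomness), producing survival sets $S^{(j)}_1,\dots,S^{(j)}_k$ for $j=1,\dots,\beta$. Call a pair of distinct $u,v\in V$ close if $|\Gamma(u)\cap\Gamma(v)|\ge\tau d$, and say it is found if there exist $j\in[\beta]$ and $i\in[k]$ with $u,v\in S^{(j)}_i$. (a) For each close pair, the probability that it is not found is at most $2^{-\beta}$. (b) If $N\ge 2$ and $\beta\ge 3\log_2 N$, then with probability at least $1-1/N$ every close pair is found.
   Context: Let $G=(U,V,E)$ be a bipartite graph with $|U|=M$ and $|V|=N$. For $v\in V$ let $\Gamma(v)\subseteq U$ be its set of neighbours, and assume $|\Gamma(v)|=d\ge 1$ for every $v\in V$. Let $k=2^{m}$ and $\alpha=2^{-r}$, where $m,r$ are positive integers. Identify $[k]=\{1,\dots,k\}$ bijectively with the vector space $\mathrm{GF}(2)^m$ (for instance via the binary representation of $i-1$). Fast-Filter model: for each $u\in U$, independently draw a uniformly random matrix $A'_u\in\mathrm{GF}(2)^{r\times m}$ and a uniformly random vector $b'_u\in\mathrm{GF}(2)^{r}$; all of these are mutually independent. For $v\in V$, let $A^v$ be the $(dr)\times m$ matrix obtained by stacking the matrices $A'_u$, $u\in\Gamma(v)$, in a fixed order, and let $b^v\in\mathrm{GF}(2)^{dr}$ be obtained by stacking the $b'_u$, $u\in\Gamma(v)$, in the same order. For $i\in[k]$ (viewed as a vector in $\mathrm{GF}(2)^m$),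 the survival set is $S_i=\{v\in V: A^v i+b^v=0\}$, with arithmetic over $\mathrm{GF}(2)$. *)

From Stdlib Require Import Reals.
From HB Require Import structures.
From mathcomp Require Import all_boot all_order all_algebra all_field.

Set Implicit Arguments.
Unset Strict Implicit.
Unset Printing Implicit Defensive.

Section FastFilter.
Local Open Scope ring_scope.

(* The randomness attached to one vertex u in U in one copy of the model:
   a matrix A'_u in GF(2)^{r x m} and a vector b'_u in GF(2)^r. *)
Definition vrand (r m : nat) : finType := ('M['F_2]_(r, m) * 'cV['F_2]_r)%type.

Definition run (M r m : nat) : finType := {ffun 'I_M -> vrand r m}.

Definition FFspace (M r m beta : nat) : finType := {ffun 'I_beta -> run M r m}.

(* Survival set S_i for i in [k] identified with x in GF(2)^m:
   v survives iff A^v x + b^v = 0, where A^v, b^v stack the blocks A'_u, b'_u,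
   u in Gamma(v); a stacked vector is zero iff each of its blocks is zero. *)
Definition survset (M N r m : nat) (Gam : 'I_N -> {set 'I_M})
    (s : run M r m) (x : 'cV['F_2]_m) : {set 'I_N} :=
  [set v | [forall u in Gam v, (s u).1 *m x + (s u).2 == 0]].

End FastFilter.

Definition found (M N r m beta : nat) (Gam : 'I_N -> {set 'I_M})
    (w : FFspace M r m beta) (u v : 'I_N) : bool :=
  [exists j : 'I_beta, exists x : 'cV['F_2]_m,
     (u \in survset Gam (w j) x) && (v \in survset Gam (w j) x)].

Local Open Scope R_scope.

Definition closeb (M N d : nat) (Gam : 'I_N -> {set 'I_M}) (tau : R) (u v : 'I_N) : bool :=
  (u != v) && (if Rle_dec (tau * INR d) (INR #|Gam u :&: Gam v|) then true else false).

Definition prob (T : finType) (E : {set T}) : R := INR #|E| / INR #|T|.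

From Stdlib Require Import Reals Lra.
From mathcomp Require Import all_boot all_algebra zify.

Import GRing.Theory.

(* For a close pair u, v the set S = Gam u :|: Gam v has n <= (2 - tau) d elements, and
   u, v are found in a run iff the stacked affine system (A'_w x + b'_w = 0)_(w in S) has a
   solution x.  The number Z of solutions has mean k alpha^n and, since the events for two
   distinct x are independent, variance at most its mean; Chebyshev gives
   P(Z = 0) <= 1 / (k alpha^n) <= 1/2.  Independence of the beta runs gives (a); a union
   bound over the N^2 pairs together with 2^beta >= N^3 gives (b). *)


Section AffineCounting.
Local Open Scope ring_scope.
Context {F : finFieldType} {r m : nat}.

Lemma card_mulmx_eq0 {z : 'cV[F]_m} : z != 0 ->
  (#|[set A : 'M[F]_(r, m) | A *m z == 0%R]| * #|{: 'cV[F]_r}| = #|{: 'M[F]_(r, m)}|)%N.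
Proof.
move=> nz_z; have [j nz_zj] : exists j, z j 0 != 0.
  apply/existsP; apply: contraR nz_z => /existsPn zj0; apply/eqP/matrixP => i k.
  by rewrite (ord1 k) mxE; apply/eqP; move: (zj0 i); rewrite negbK.
(* Every fibre of [A |-> A *m z] is a translate of its kernel. *)
have card_fibre b : #|[set A : 'M[F]_(r, m) | A *m z == b]| =
                    #|[set A : 'M[F]_(r, m) | A *m z == 0]|.
  pose E := (z j 0)^-1 *: (b *m delta_mx 0 j).
  have EzE : E *m z = b.
    rewrite /E -scalemxAl -mulmxA -rowE (mx11_scalar (row j z)) mxE mul_mx_scalar.
    by rewrite scalerA mulVf // scale1r.
  have -> : [set A : 'M[F]_(r, m) | A *m z == b] = (+%R^~ E) @: [set A | A *m z == 0].
    apply/setP => A; rewrite inE; apply/eqP/imsetP => [AzE|[B]].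
      by exists (A - E); rewrite ?subrK // inE mulmxBl AzE EzE subrr.
    by rewrite inE => /eqP Bz0 ->; rewrite mulmxDl Bz0 EzE add0r.
  by rewrite card_imset //; apply: addIr.
apply/esym; rewrite -[X in X = _]sum1_card (partition_big (fun A => A *m z) predT) //=.
rewrite mulnC -sum_nat_const; apply: eq_bigr => b _.
by rewrite -(card_fibre b) -sum1_card; apply: eq_bigl => A; rewrite inE.
Qed.

Lemma card_affine_zeros (x : 'cV[F]_m) :
  #|[set a : 'M[F]_(r, m) * 'cV[F]_r | a.1 *m x + a.2 == 0]| = #|{: 'M[F]_(r, m)}|.
Proof.
have -> : [set a : 'M[F]_(r, m) * 'cV[F]_r | a.1 *m x + a.2 == 0] =
          (fun A => (A, - (A *m x))) @: setT.
  apply/setP => [[A b]]; rewrite inE /=; apply/idP/imsetP => [|[B _ [-> ->]]].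
    by rewrite addrC addr_eq0 => /eqP ->; exists A; rewrite ?in_setT.
  by rewrite subrr.
by rewrite card_imset ?cardsT // => A B [].
Qed.

Lemma card_affine_common_zeros {x y : 'cV[F]_m} : x != y ->
  (#|[set a : 'M[F]_(r, m) * 'cV[F]_r | (a.1 *m x + a.2 == 0) && (a.1 *m y + a.2 == 0)]%R|
    * #|{: 'cV[F]_r}| = #|{: 'M[F]_(r, m)}|)%N.
Proof.
move=> neq_xy.
have -> : [set a : 'M[F]_(r, m) * 'cV[F]_r | (a.1 *m x + a.2 == 0) && (a.1 *m y + a.2 == 0)] =
          (fun A => (A, - (A *m x))) @: [set A | A *m (x - y) == 0].
  apply/setP => [[A b]]; rewrite inE /= [_ + b]addrC addr_eq0.
  apply/idP/imsetP => [/andP[/eqP-> Ay]|[B]].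
    by exists A; rewrite // inE mulmxBr -oppr_eq0 opprB.
  rewrite inE mulmxBr subr_eq0 => /eqP ByBx [-> ->].
  by rewrite eqxx -ByBx subrr eqxx.
rewrite card_imset; last by move=> A B [].
by rewrite card_mulmx_eq0 // subr_eq0.
Qed.

End AffineCounting.

Lemma card_ffun_forall_in {I V : finType} (S : {set I}) (P : pred V) e :
  #|P| * e = #|V| ->
  #|[set f : {ffun I -> V} | [forall i in S, P (f i)]]| * e ^ #|S| = #|{: {ffun I -> V}}|.
Proof.
move=> cardP; rewrite card_ffun.
pose G i := if i \in S then P else predT.
have -> : #|[set f : {ffun I -> V} | [forall i in S, P (f i)]]| =
          #|(family G : simpl_pred {ffun I -> V})|.
  apply: eq_card => f; rewrite inE; apply/forall_inP/familyP => Pf i.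
    by rewrite /G; case: ifP => // /Pf.
  by move=> Si; move: (Pf i); rewrite /G Si.
rewrite card_family /image_mem foldrE big_map big_enum /=.
rewrite -!prod_nat_const [X in _ * X]big_mkcond big_mkcond [RHS]big_mkcond -big_split /=.
apply: eq_bigr => i _; rewrite /G; case: ifP => _; first by rewrite cardP.
by rewrite muln1; apply: eq_card.
Qed.

Section RunCounting.
Context {M r m : nat}.

Definition solves (S : {set 'I_M}) (s : run M r m) (x : 'cV['F_2]_m) : bool :=
  [forall u in S, ((s u).1 *m x + (s u).2 == 0)%R].

Lemma card_solves S x :
  #|[set s : run M r m | solves S s x]| * #|{: 'cV['F_2]_r}| ^ #|S| = #|{: run M r m}|.
Proof.
apply: (card_ffun_forall_in S [pred a : vrand r m | (a.1 *m x + a.2 == 0)%R]).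
by rewrite card_prod -(card_affine_zeros (r:=r) x); congr (_ * _); apply: eq_card => a; rewrite !inE.
Qed.

Lemma card_solves2 S x y : x != y ->
  #|[set s : run M r m | solves S s x && solves S s y]|
    * (#|{: 'cV['F_2]_r}| ^ #|S|) ^ 2 = #|{: run M r m}|.
Proof.
move=> neq_xy; rewrite -expnM (mulnC #|S|) expnM.
have -> : [set s : run M r m | solves S s x && solves S s y] =
    [set s : run M r m | [forall u in S,
      [pred a : vrand r m | (a.1 *m x + a.2 == 0) && (a.1 *m y + a.2 == 0)]%R (s u)]].
  apply/setP => s; rewrite !inE; apply/andP/forall_inP => [[/forall_inP Sx /forall_inP Sy] u Su|Sxy].
    by rewrite /= Sx ?Sy.
  by split; apply/forall_inP => u /Sxy /andP[].
apply: card_ffun_forall_in.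
rewrite card_prod mulnA -(card_affine_common_zeros (r:=r) neq_xy).
by congr (_ * _ * _); apply: eq_card => a; rewrite !inE.
Qed.

End RunCounting.

Lemma chebyshev_pointwise K q z : K ^ 2 * (z == 0) + 2 * q * K * z <= q ^ 2 * z ^ 2 + K ^ 2.
Proof. by case: z => [|z] /=; [nia | case: (nat_Cauchy (q * z.+1) K) => + _; nia]. Qed.

Lemma sum_nat_of_bool {T : finType} (b : pred T) : \sum_s (b s : nat) = #|[set s | b s]|.
Proof. by rewrite -sum1_card [RHS]big_mkcond; apply: eq_bigr => s _; rewrite inE; case: (b s). Qed.

(* Chebyshev's inequality P(Z = 0) <= Var Z / (E Z)^2 for a count Z with E Z = K/q and
   E Z^2 = K/q + K(K-1)/q^2, cleared of denominators. *)
Lemma card_eq0_second_moment {T : finType} {Z : T -> nat} {K q : nat} :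
  (\sum_s Z s) * q = K * #|T| ->
  (\sum_s Z s ^ 2) * q ^ 2 <= K * (#|T| * q + (K - 1) * #|T|) ->
  K * #|[set s | Z s == 0]| <= #|T| * q.
Proof.
have [-> //|K_gt0] := posnP K; move=> sumZ sumZ2.
have : \sum_s (K ^ 2 * (Z s == 0) + 2 * q * K * Z s) <= \sum_s (q ^ 2 * Z s ^ 2 + K ^ 2).
  by apply: leq_sum => s _; apply: chebyshev_pointwise.
rewrite !big_split -!big_distrr sum_nat_const sum_nat_of_bool /=.
rewrite (_ : 2 * q * K * _ = 2 * K * (K * #|T|)); last by nia.
rewrite (_ : #|xpredT| = #|T|) //.
move: sumZ2; set X := #|_|; set B := \sum_s _ => sumZ2 bound.
have : K * (K * X + #|T|) <= K * (#|T| * q) by nia.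
by rewrite leq_pmul2l // => /(leq_trans (leq_addr _ _)).
Qed.

Lemma card_run_unsolvable M r m (S : {set 'I_M}) :
  2 * #|{: 'cV['F_2]_r}| ^ #|S| <= #|{: 'cV['F_2]_m}| ->
  2 * #|[set s : run M r m | ~~ [exists x, solves S s x]]| <= #|{: run M r m}|.
Proof.
set q := _ ^ #|S|; set K := #|{: 'cV_m}|; set T := #|{: run M r m}| => two_q_le_K.
pose Z (s : run M r m) := \sum_(x : 'cV['F_2]_m) (solves S s x : nat).
have sumZ : (\sum_s Z s) * q = K * T.
  rewrite exchange_big big_distrl /= (eq_bigr (fun _ => T)) ?sum_nat_const // => x _.
  by rewrite sum_nat_of_bool card_solves.
have sumZ2 : (\sum_s Z s ^ 2) * q ^ 2 <= K * (T * q + (K - 1) * T).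
  under eq_bigr => s _ do rewrite -mulnn big_distrlr /=.
  rewrite exchange_big big_distrl /= (eq_bigr (fun _ => T * q + (K - 1) * T)) ?sum_nat_const //.
  move=> x _; rewrite exchange_big big_distrl (bigD1 x) //=.
  under eq_bigr => s _ do rewrite mulnb andbb.
  rewrite sum_nat_of_bool mulnA card_solves (eq_bigr (fun _ => T)); last first.
    move=> y neq_yx; under eq_bigr => s _ do rewrite mulnb.
    by rewrite sum_nat_of_bool card_solves2 // eq_sym.
  by congr (_ + _); rewrite subn1 -(cardC1 x) sum_nat_const.
have := card_eq0_second_moment sumZ sumZ2.
rewrite (_ : [set s | Z s == 0] = [set s | ~~ [exists x, solves S s x]]); last first.
  apply/setP => s; rewrite !inE sum_nat_eq0 negb_exists.
  by apply: eq_forallb => x; case: solves.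
have q_gt0 : 0 < q by rewrite expn_gt0; apply/orP; left; apply/card_gt0P; exists 0%R.
move=> K_bad; rewrite -(leq_pmul2r q_gt0); apply: leq_trans K_bad.
by rewrite mulnAC leq_mul2r two_q_le_K orbT.
Qed.

Lemma card_FF_unsolvable M r m beta (S : {set 'I_M}) :
  2 * #|{: 'cV['F_2]_r}| ^ #|S| <= #|{: 'cV['F_2]_m}| ->
  #|[set w : FFspace M r m beta | ~~ [exists j, exists x, solves S (w j) x]]| * 2 ^ beta
    <= #|{: FFspace M r m beta}|.
Proof.
move=> /card_run_unsolvable; set Bad := [set s | _] => card_Bad.
have -> : #|[set w : FFspace M r m beta | ~~ [exists j, exists x, solves S (w j) x]]| =
          #|(ffun_on Bad : simpl_pred (FFspace M r m beta))|.
  apply: eq_card => w; rewrite inE negb_exists.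
  by apply/forallP/ffun_onP => Bw j; move: (Bw j); rewrite inE.
rewrite card_ffun_on card_ffun card_ord -expnMn mulnC.
by case: beta => [|beta]; rewrite ?expn0 ?leq_exp2r.
Qed.

Lemma found_solves M N r m beta (Gam : 'I_N -> {set 'I_M}) (w : FFspace M r m beta) u v :
  found Gam w u v = [exists j, exists x, solves (Gam u :|: Gam v) (w j) x].
Proof.
apply: eq_existsb => j; apply: eq_existsb => x; rewrite !inE.
apply/andP/forall_inP => [[/forall_inP Su /forall_inP Sv] z|Suv].
  by rewrite inE => /orP[/Su|/Sv].
by split; apply/forall_inP => z Gz; apply: Suv; rewrite inE Gz ?orbT.
Qed.

Lemma card_bigcup_le {I T : finType} (P : pred I) (F : I -> {set T}) :
  #|\bigcup_(i | P i) F i| <= \sum_(i | P i) #|F i|.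
Proof.
apply: (big_ind2 (fun (A : {set T}) n => #|A| <= n)) => // [|A m B n Am Bn].
  by rewrite cards0.
by apply: leq_trans (leq_card_setU A B) _; apply: leq_add.
Qed.

Lemma card_bigcup_mul_le {I T : finType} {P : pred I} {F : I -> {set T}} {c n : nat} :
  (forall i, P i -> #|F i| * c <= n) -> #|\bigcup_(i | P i) F i| * c <= #|I| * n.
Proof.
move=> Fc_le; apply: leq_trans (leq_mul (card_bigcup_le P F) (leqnn c)) _.
rewrite big_distrl /=; apply: (@leq_trans (\sum_(i | P i) n)); first exact: leq_sum.
by rewrite sum_nat_cond_const leq_mul2r max_card orbT.
Qed.

Local Open Scope R_scope.

Lemma INR_expn a n : INR (a ^ n)%N = INR a ^ n.
Proof. by elim: n => [|n IHn] //; rewrite expnS mulnE mult_INR IHn. Qed.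

Lemma INR_pow2 n : INR (2 ^ n)%N = 2 ^ n.
Proof. by rewrite INR_expn; congr pow; simpl; ring. Qed.

Lemma prob_le_Rinv_pow2 (T : finType) (E : {set T}) b :
  (0 < #|T|)%N -> (#|E| * 2 ^ b <= #|T|)%N -> prob E <= / 2 ^ b.
Proof.
move=> /ltP/lt_0_INR T_gt0 /leP/le_INR; rewrite mulnE mult_INR INR_pow2 => E_le.
have pow2_gt0 : 0 < 2 ^ b by apply: pow_lt; lra.
apply: (Rmult_le_reg_r (2 ^ b * INR #|T|)); first exact: Rmult_lt_0_compat.
rewrite /prob; replace (INR #|E| / INR #|T| * (2 ^ b * INR #|T|)) with (INR #|E| * 2 ^ b).
  by replace (/ 2 ^ b * (2 ^ b * INR #|T|)) with (INR #|T|) by (field; lra).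
by field; lra.
Qed.

Lemma prob_ge_1_sub_Rinv (T : finType) (E : {set T}) n :
  (0 < #|T|)%N -> (0 < n)%N -> (#|~: E| * n <= #|T|)%N -> 1 - / INR n <= prob E.
Proof.
move=> /ltP/lt_0_INR T_gt0 /ltP/lt_0_INR n_gt0 /leP/le_INR; rewrite mulnE mult_INR => cE_le.
have cardE : INR #|E| = INR #|T| - INR #|~: E| by rewrite -(cardsC E) plus_INR; ring.
apply: (Rmult_le_reg_r (INR n * INR #|T|)); first exact: Rmult_lt_0_compat.
rewrite /prob cardE; replace ((1 - / INR n) * (INR n * INR #|T|)) with (INR n * INR #|T| - INR #|T|).
  by replace ((INR #|T| - INR #|~: E|) / INR #|T| * (INR n * INR #|T|))
    with (INR n * INR #|T| - INR #|~: E| * INR n) by (field; lra); lra.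
by field; lra.
Qed.

Lemma card_setU_le_of_closeb {M N d} {Gam : 'I_N -> {set 'I_M}} {tau u v} :
  (forall v, #|Gam v| = d) -> closeb d Gam tau u v ->
  INR #|Gam u :|: Gam v| <= (2 - tau) * INR d.
Proof.
move=> card_Gam /andP[_]; case: Rle_dec => // meet_ge _.
have := cardsUI (Gam u) (Gam v); rewrite !card_Gam => /(congr1 INR).
by rewrite !addnE !plus_INR; lra.
Qed.

Lemma Rpower_Rinv a e : 0 < a -> Rpower (/ a) e = Rpower a (- e).
Proof. by move=> a_gt0; rewrite /Rpower ln_Rinv //; congr exp; ring. Qed.

Lemma pow2_ge_double_pow2 m r n (e : R) :
  INR n <= e -> 2 ^ m * Rpower (/ 2 ^ r) e >= 2 -> (2 * (2 ^ r) ^ n <= 2 ^ m)%N.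
Proof.
move=> n_le_e capacity; apply/leP/INR_le.
rewrite mulnE mult_INR INR_expn !INR_pow2 (_ : INR 2 = 2); last by simpl; ring.
have pow2r_ge1 : 1 <= 2 ^ r by apply: pow_R1_Rle; lra.
have pow2rn_gt0 : 0 < (2 ^ r) ^ n by apply: pow_lt; lra.
have : Rpower (/ 2 ^ r) e <= / (2 ^ r) ^ n.
  rewrite Rpower_Rinv; last lra.
  rewrite -(Rpower_pow n (2 ^ r)) -?Rpower_Ropp; last lra.
  by apply: Rle_Rpower => //; lra.
have pow2m_ge0 : 0 <= 2 ^ m by apply: pow_le; lra.
move=> /(Rmult_le_compat_l _ _ _ pow2m_ge0) /(Rle_trans _ _ _ (Rge_le _ _ capacity)).
move=> /(Rmult_le_compat_r _ _ _ (Rlt_le _ _ pow2rn_gt0)).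
by rewrite Rmult_assoc Rinv_l ?Rmult_1_r; lra.
Qed.

Lemma cube_le_pow2 {N beta : nat} : (0 < N)%N ->
  INR beta >= 3 * (ln (INR N) / ln 2) -> (N ^ 3 <= 2 ^ beta)%N.
Proof.
move=> /ltP/lt_0_INR N_gt0 beta_ge; apply/leP/INR_le; rewrite INR_expn INR_pow2.
have ln2_gt0 : 0 < ln 2 by rewrite -ln_1; apply: ln_increasing; lra.
rewrite -!Rpower_pow; [|lra|lra].
have -> : Rpower (INR N) (INR 3) = Rpower 2 (3 * (ln (INR N) / ln 2)).
  by rewrite /Rpower; congr exp; simpl INR; field; lra.
by apply: Rle_Rpower; lra.
Qed.

Lemma card_FF_not_found {M N d m r} beta {Gam : 'I_N -> {set 'I_M}} {tau u v} :
  (forall v, #|Gam v| = d) ->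
  2 ^ m * Rpower (/ 2 ^ r) ((2 - tau) * INR d) >= 2 ->
  closeb d Gam tau u v ->
  (#|[set w : FFspace M r m beta | ~~ found Gam w u v]| * 2 ^ beta
    <= #|{: FFspace M r m beta}|)%N.
Proof.
move=> card_Gam capacity /(card_setU_le_of_closeb card_Gam) union_le.
have -> : [set w : FFspace M r m beta | ~~ found Gam w u v] =
          [set w : FFspace M r m beta | ~~ [exists j, exists x, solves (Gam u :|: Gam v) (w j) x]].
  by apply/setP => w; rewrite !inE found_solves.
apply: card_FF_unsolvable; rewrite !card_mx card_Fp // !muln1.
exact: pow2_ge_double_pow2 union_le capacity.
Qed.

Lemma setC_all_close_found M N d m r beta (Gam : 'I_N -> {set 'I_M}) tau :
  ~: [set w : FFspace M r m beta |
        [forall u, forall v, closeb d Gam tau u v ==> found Gam w u v]] =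
  \bigcup_(p | closeb d Gam tau p.1 p.2) [set w | ~~ found Gam w p.1 p.2].
Proof.
apply/setP => w; rewrite !inE; apply/forallPn/bigcupP => [[u /forallPn[v]]|[[u v] /= close_uv]].
  by rewrite negb_imply => /andP[close_uv not_found]; exists (u, v); rewrite ?inE.
by rewrite inE => not_found; exists u; apply/forallPn; exists v; rewrite negb_imply close_uv.
Qed.

Lemma FFspace_nonempty M r m beta : (0 < #|{: FFspace M r m beta}|)%N.
Proof. by apply/card_gt0P; exists [ffun _ => [ffun _ => (0%R, 0%R)]]. Qed.

Theorem mainTheorem5 (M N d m r beta : nat) (Gam : 'I_N -> {set 'I_M}) (tau : R) :
  (0 < m)%N -> (0 < r)%N -> (1 <= d)%N ->
  (forall v : 'I_N, #|Gam v| = d) ->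
  0 < tau <= 1 ->
  2 ^ m * Rpower (/ 2 ^ r) ((2 - tau) * INR d) >= 2 ->
  (1 <= beta)%N ->
  (forall u v : 'I_N, closeb d Gam tau u v ->
     prob [set w : FFspace M r m beta | ~~ found Gam w u v] <= / 2 ^ beta)
  /\
  ((2 <= N)%N -> INR beta >= 3 * (ln (INR N) / ln 2) ->
     prob [set w : FFspace M r m beta |
             [forall u : 'I_N, forall v : 'I_N, closeb d Gam tau u v ==> found Gam w u v]]
       >= 1 - / INR N).
Proof.
move=> _ _ _ card_Gam _ capacity _.
have not_found_le := card_FF_not_found beta card_Gam capacity.
split=> [u v /not_found_le|N_ge2 /(cube_le_pow2 (ltnW N_ge2)) N3_le].
  exact/prob_le_Rinv_pow2/FFspace_nonempty.
apply/Rle_ge/prob_ge_1_sub_Rinv; [exact: FFspace_nonempty | exact: ltnW|].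
rewrite setC_all_close_found.
have := card_bigcup_mul_le (fun p => not_found_le p.1 p.2).
rewrite card_prod card_ord; set X := #|_| => X_le.
rewrite -(@leq_pmul2l (N * N)%N) ?muln_gt0 ?(ltnW N_ge2) //; apply: leq_trans X_le.
by rewrite (_ : N * N * (X * N) = X * N ^ 3)%N ?leq_mul2l ?N3_le ?orbT //; nia.
Qed.
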